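(* Let $T>0$. There is a constant $C$ such that for any two $\mathbf{u},\mathbf{w}\in C([0,T];X)$, all $t\in[0,T]$ and $\mathbf{x}\in\Omega$, $$|\mathcal{L}^\epsilon[\mathbf{u}](t,\mathbf{x})-\mathcal{L}^\epsilon[\mathbf{w}](t,\mathbf{x})|\le C\,\|\mathbf{u}-\mathbf{w}\|_{C([0,T];X)}\int_\Omega\frac{\rho^\epsilon(\mathbf{y},\mathbf{x})}{|\mathbf{y}-\mathbf{x}|}\,d\mathbf{y},$$ where $C$ is independent of $\mathbf{u}$ and $\mathbf{w}$.
   Context: Let $d\in\{2,3\}$ and let $\Omega\subset\mathbb{R}^d$ be a bounded domain. Fix a horizon $\epsilon>0$, a length $L>0$ and a bond stiffness $\overline{\mu}>0$. Let $\omega_d$ be the volume of the unit ball and $V_d^\epsilon=\omega_d\epsilon^d$. Let $J:[0,\infty)\to[0,\infty)$ be positive and radially decreasing on $[0,1)$ with $J(0)=M$ and $J(r)=0$ for $r\ge1$; $J^\epsilon(s)=J(s/\epsilon)$; the kernel is $\rho^\epsilon(\mathbf{y},\mathbf{x})=\chi_\Omega(\mathbf{y})J^\epsilon(|\mathbf{y}-\mathbf{x}|)/(\epsilon V_d^\epsilon)$. For a time-dependent displacement $\mathbf{u}$ and $\mathbf{y}\ne\mathbf{x}$, $\mathbf{e}=(\mathbf{y}-\mathbf{x})/|\mathbf{y}-\mathbf{x}|$, $S(\mathbf{y},\mathbf{x},\mathbf{u}(t))=(\mathbf{u}(t,\mathbf{y})-\mathbf{u}(t,\mathbf{x}))\cdot\mathbf{e}/|\mathbf{y}-\mathbf{x}|$,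 $S^*(t,\mathbf{y},\mathbf{x},\mathbf{u})=\max_{0\le\tau\le t}S(\mathbf{y},\mathbf{x},\mathbf{u}(\tau))$, $r^*=\sqrt{|\mathbf{y}-\mathbf{x}|/L}\,S^*$. The failure envelope is $g'$ for a convex–concave potential $g$ with $0<r^L\le r^C<r^F$: $g'(r)=\overline{\mu}r$ for $r\le r^L$, nonlinear beyond $r^L$ (hardening up to $r^C$), decreasing to $0$ at $r^F$ and $g'=0$ for $r\ge r^F$ (e.g. bilinear: $g'(r)=\overline{\mu}r$ for $r<r^C$, $\overline{\mu}r^C\frac{r^F-r}{r^F-r^C}$ on $[r^C,r^F]$, $0$ beyond). The two-point phase field is $\gamma(\mathbf{u})(\mathbf{y},\mathbf{x},t)=g'(r^* )/(\overline{\mu}r^* )\in[0,1]$ ($=1$ if $r^*\le r^L$). The stiffness is $\mu(\gamma)=\overline{\mu}$ if $S(\mathbf{y},\mathbf{x},\mathbf{u}(t))\le0$ and $\overline{\mu}\gamma(\mathbf{u})(\mathbf{y},\mathbf{x},t)$ if $S>0$. The bond force is $\boldsymbol{f}^\epsilon(t,\mathbf{y},\mathbf{x},\mathbf{u})=\rho^\epsilon(\mathbf{y},\mathbf{x})\mu(\gamma(\mathbf{u})(\mathbf{y},\mathbf{x},t))S(\mathbf{y},\mathbf{x},\mathbf{u}(t))\mathbf{e}$ and $\mathcal{L}^\epsilon[\mathbf{u}](t,\mathbf{x})=-\int_\Omega\boldsymbol{f}^\epsilon(t,\mathbf{y},\mathbf{x},\mathbf{u})\,d\mathbf{y}$. $X$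 is the subspace of $L^\infty(\Omega;\mathbb{R}^d)$ $L^2$-orthogonal to the rigid motions $\{\mathbb{Q}\mathbf{x}+\mathbf{c}:\mathbb{Q}^T=-\mathbb{Q}\}$, and $C([0,T];X)$ has norm $\sup_t\|\mathbf{u}(t)\|_{L^\infty}$. *)

From HB Require Import structures.
From mathcomp Require Import all_boot all_order all_algebra.
From mathcomp Require Import all_classical all_reals all_analysis.
Set Implicit Arguments. Unset Strict Implicit. Unset Printing Implicit Defensive.
Import Order.TTheory GRing.Theory Num.Theory.
Import numFieldNormedType.Exports.
Local Open Scope classical_set_scope.
Local Open Scope ring_scope.

Section PD.
Variable R : realType.

Definition dotv {d : nat} (a b : 'rV[R]_d) : R := \sum_i a 0 i * b 0 i.
Definition enorm {d : nat} (a : 'rV[R]_d) : R := Num.sqrt (dotv a a).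

Definition bond_e {d : nat} (y x : 'rV[R]_d) : 'rV[R]_d := (enorm (y - x))^-1 *: (y - x).
Definition strain {d : nat} (y x : 'rV[R]_d) (v : 'rV[R]_d -> 'rV[R]_d) : R :=
  dotv (v y - v x) (bond_e y x) / enorm (y - x).

Definition strain_max {d : nat} (u : R -> 'rV[R]_d -> 'rV[R]_d) (t : R) (y x : 'rV[R]_d) : R :=
  sup [set s | exists2 tau, 0 <= tau <= t & s = strain y x (u tau)].

Definition rstar {d : nat} (L : R) (u : R -> 'rV[R]_d -> 'rV[R]_d) (t : R) (y x : 'rV[R]_d) : R :=
  Num.sqrt (enorm (y - x) / L) * strain_max u t y x.

Definition phase {d : nat} (gp : R -> R) (mubar rL L : R) (u : R -> 'rV[R]_d -> 'rV[R]_d)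
  (t : R) (y x : 'rV[R]_d) : R :=
  let r := rstar L u t y x in if r <= rL then 1 else gp r / (mubar * r).

Definition stiffness {d : nat} (gp : R -> R) (mubar rL L : R) (u : R -> 'rV[R]_d -> 'rV[R]_d)
  (t : R) (y x : 'rV[R]_d) : R :=
  if strain y x (u t) <= 0 then mubar else mubar * phase gp mubar rL L u t y x.

Definition kernel {d : nat} (Omega : set 'rV[R]_d) (J : R -> R) (omega_d eps : R)
  (y x : 'rV[R]_d) : R :=
  (if `[< Omega y >] then 1 else 0) * J (enorm (y - x) / eps) / (eps * (omega_d * eps ^+ d)).

Definition bond_force {d : nat} (Omega : set 'rV[R]_d) (J : R -> R) (omega_d eps : R)
  (gp : R -> R) (mubar rL L : R) (u : R -> 'rV[R]_d -> 'rV[R]_d) (t : R) (y x : 'rV[R]_d)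
  : 'rV[R]_d :=
  (kernel Omega J omega_d eps y x * stiffness gp mubar rL L u t y x * strain y x (u t))
    *: bond_e y x.

(* L^eps[u](t,x) = - int_Omega f^eps(t,y,x,u) dy  (componentwise Lebesgue integral);
   points of R^d are represented in the measure space T through coord : T -> 'rV_d *)
Definition peri_op {d : nat} {dT : measure_display} {T : measurableType dT}
  (mu : {measure set T -> \bar R}) (coord : T -> 'rV[R]_d)
  (Omega : set 'rV[R]_d) (J : R -> R) (omega_d eps : R)
  (gp : R -> R) (mubar rL L : R) (u : R -> 'rV[R]_d -> 'rV[R]_d) (t : R) (x : 'rV[R]_d)
  : 'rV[R]_d :=
  \row_i (- Rintegral mu (coord @^-1` Omega)
              (fun z => bond_force Omega J omega_d eps gp mubar rL L u t (coord z) x 0 i)).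

Definition CX_norm {d : nat} (T0 : R) (Omega : set 'rV[R]_d) (u : R -> 'rV[R]_d -> 'rV[R]_d) : R :=
  sup [set s | exists t y, [/\ 0 <= t <= T0, Omega y & s = enorm (u t y)]].

(* u in C([0,T];X): X = bounded measurable fields on Omega, L^2-orthogonal to rigid motions
   {x |-> Q x + c : Q^T = -Q}; continuity in t for the sup norm. *)
Definition in_CX {d : nat} {dT : measure_display} {T : measurableType dT}
  (mu : {measure set T -> \bar R}) (coord : T -> 'rV[R]_d)
  (T0 : R) (Omega : set 'rV[R]_d) (u : R -> 'rV[R]_d -> 'rV[R]_d) : Prop :=
  [/\ (forall t, 0 <= t <= T0 -> forall i,
         measurable_fun (coord @^-1` Omega) (fun z => u t (coord z) 0 i)),
      (exists B, forall t y, 0 <= t <= T0 -> Omega y -> enorm (u t y) <= B),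
      (forall t, 0 <= t <= T0 -> forall e : R, 0 < e -> exists2 delta : R, 0 < delta &
         forall s, 0 <= s <= T0 -> `|s - t| < delta ->
           forall y, Omega y -> enorm (u s y - u t y) <= e)
    & (forall t, 0 <= t <= T0 -> forall (Q : 'M[R]_d) (c : 'rV[R]_d), Q^T = - Q ->
         Rintegral mu (coord @^-1` Omega)
           (fun z => dotv (u t (coord z)) (coord z *m Q^T + c)) = 0)].

(* The claim, for a given model (T, mu, coord) of Lebesgue measure on R^d. *)
Definition lipschitz_claim (d : nat) {dT : measure_display} {T : measurableType dT}
  (mu : {measure set T -> \bar R}) (coord : T -> 'rV[R]_d) (omega_d : R) : Prop :=
  forall (Omega : set 'rV[R]_d) (eps L mubar M T0 rL rC rF : R) (J gp : R -> R),
  open Omega -> connected Omega -> Omega !=set0 ->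
  (exists B, forall y, Omega y -> enorm y <= B) ->
  measurable (coord @^-1` Omega) ->
  0 < eps -> 0 < L -> 0 < mubar -> 0 < T0 ->
  (forall r, 0 <= r < 1 -> 0 < J r) ->
  (forall r s, 0 <= r <= s -> s < 1 -> J s <= J r) ->
  J 0 = M ->
  (forall r, 1 <= r -> J r = 0) ->
  0 < rL -> rL <= rC -> rC < rF ->
  (forall r, 0 <= r <= rL -> gp r = mubar * r) ->
  (forall r s, rL <= r <= s -> s <= rC -> gp r <= gp s) ->
  (forall r s, rC <= r <= s -> s <= rF -> gp s <= gp r) ->
  (forall r, rF <= r -> gp r = 0) ->
  (forall r, 0 <= r -> 0 <= gp r <= mubar * r) ->
  (exists K, forall r s, 0 <= r -> 0 <= s -> `|gp r - gp s| <= K * `|r - s|) ->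
  exists C : R, forall u w : R -> 'rV[R]_d -> 'rV[R]_d,
    in_CX mu coord T0 Omega u -> in_CX mu coord T0 Omega w ->
    forall t x, 0 <= t <= T0 -> Omega x ->
    ((enorm (peri_op mu coord Omega J omega_d eps gp mubar rL L u t x
             - peri_op mu coord Omega J omega_d eps gp mubar rL L w t x))%:E
     <= (C * CX_norm T0 Omega (fun s y => u s y - w s y))%:E
        * \int[mu]_(z in coord @^-1` Omega)
             (kernel Omega J omega_d eps (coord z) x / enorm (coord z - x))%:E)%E.

Definition coord2 (p : R * R) : 'rV[R]_2 := \row_(i < 2) [:: p.1; p.2]`_i.
Definition coord3 (p : (R * R) * R) : 'rV[R]_3 := \row_(i < 3) [:: p.1.1; p.1.2; p.2]`_i.
Definition leb2 := (@lebesgue_measure R \x @lebesgue_measure R)%E.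
Definition leb3 := ((@lebesgue_measure R \x @lebesgue_measure R) \x @lebesgue_measure R)%E.

End PD.

(* Write the bond force as rho(y,x) F(S, S* ) e, where F(S, S* ) = mu(gamma) S is mubar S
   for S <= 0 and h(c S* ) S for S > 0, with c = sqrt(|y - x| / L) and h(r) = g'(r) / r.
   The secant modulus h takes values in [0, mubar] and, g' being K-Lipschitz, satisfies
   r' |h(r) - h(r')| <= (K + mubar) |r - r'|; since 0 < S <= S*, this makes F Lipschitz:
   |F(S, S* ) - F(S', S'* )| <= mubar |S - S'| + (K + mubar) |S* - S'*|.
   Both |S(u) - S(w)| and |S*(u) - S*(w)| are at most 2 ||u - w|| / |y - x|, so every
   component of the force difference is at most 2 (2 mubar + K) ||u - w|| rho / |y - x|.
   Integrating and bounding the Euclidean norm by the sum of the d components gives the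
   claim with C = 2 d (2 mubar + K). The integrals are those of measurable functions
   because, u being continuous in time, S* is a supremum over a countable dense set of
   times. *)

From Pilot Require Import Defs.
From HB Require Import structures.
From mathcomp Require Import all_boot all_order all_algebra.
From mathcomp Require Import all_classical all_reals all_analysis.
From mathcomp Require Import ring lra measurable_realfun.
Set Implicit Arguments. Unset Strict Implicit. Unset Printing Implicit Defensive.
Import Order.TTheory GRing.Theory Num.Theory.
Import numFieldNormedType.Exports.
Local Open Scope classical_set_scope.
Local Open Scope ring_scope.

Section Euclid.
Variables (R : realType) (d : nat).
Implicit Types a b c : 'rV[R]_d.

Lemma dotvC a b : dotv a b = dotv b a.
Proof. by apply: eq_bigr => i _; rewrite mulrC. Qed.

Lemma dotvDl a b c : dotv (a + b) c = dotv a c + dotv b c.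
Proof. by rewrite /dotv -big_split; apply: eq_bigr => i _; rewrite !mxE mulrDl. Qed.

Lemma dotvZl (k : R) a c : dotv (k *: a) c = k * dotv a c.
Proof. by rewrite /dotv mulr_sumr; apply: eq_bigr => i _; rewrite !mxE mulrA. Qed.

Lemma dotvNl a c : dotv (- a) c = - dotv a c.
Proof. by rewrite -scaleN1r dotvZl mulN1r. Qed.

Lemma dotvBl a b c : dotv (a - b) c = dotv a c - dotv b c.
Proof. by rewrite dotvDl dotvNl. Qed.

Lemma dotv0l c : dotv 0 c = 0.
Proof. by rewrite -(scale0r 0) dotvZl mul0r. Qed.

Lemma dotvv_ge0 a : 0 <= dotv a a.
Proof. by apply: sumr_ge0 => i _; rewrite -expr2 sqr_ge0. Qed.

Lemma enorm_ge0 a : 0 <= enorm a.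
Proof. exact: sqrtr_ge0. Qed.

Lemma sqr_enorm a : enorm a ^+ 2 = dotv a a.
Proof. by rewrite sqr_sqrtr // dotvv_ge0. Qed.

Lemma enorm0 : enorm (0 : 'rV[R]_d) = 0.
Proof. by rewrite /enorm dotv0l sqrtr0. Qed.

Lemma enorm_eq0 a : enorm a = 0 -> a = 0.
Proof.
move=> a0; have /eqP : dotv a a = 0 by rewrite -sqr_enorm a0 expr0n.
rewrite psumr_eq0 => [/allP a_eq0|i _]; last by rewrite -expr2 sqr_ge0.
apply/rowP => i; rewrite mxE.
by have := a_eq0 i (mem_index_enum _); rewrite /= mulf_eq0 orbb => /eqP.
Qed.

Lemma dotv_le_enorm a b : dotv a b <= enorm a * enorm b.
Proof.
have [/enorm_eq0 ->|a0] := eqVneq (enorm a) 0; first by rewrite dotv0l mulr_ge0 ?enorm_ge0.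
have [/enorm_eq0 ->|b0] := eqVneq (enorm b) 0; first by rewrite dotvC dotv0l mulr_ge0 ?enorm_ge0.
have ab_gt0 : 0 < enorm a * enorm b by rewrite mulr_gt0 // lt0r ?a0 ?b0 enorm_ge0.
have := dotvv_ge0 (enorm b *: a - enorm a *: b).
rewrite dotvBl !dotvZl !(dotvC _ (_ - _)) !dotvBl !dotvZl -!sqr_enorm (dotvC b a).
have -> : enorm b * (enorm b * enorm a ^+ 2 - enorm a * dotv a b)
    - enorm a * (enorm b * dotv a b - enorm a * enorm b ^+ 2)
    = (enorm a * enorm b) *+ 2 * (enorm a * enorm b - dotv a b) by ring.
by rewrite pmulr_rge0 ?pmulrn_lgt0 // subr_ge0.
Qed.

Lemma enormN a : enorm (- a) = enorm a.
Proof. by rewrite /enorm dotvNl dotvC dotvNl opprK. Qed.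

Lemma normr_dotv_le a b : `|dotv a b| <= enorm a * enorm b.
Proof. by rewrite ler_norml dotv_le_enorm andbT lerNl -dotvNl -(enormN a) dotv_le_enorm. Qed.

Lemma ler_enormD a b : enorm (a + b) <= enorm a + enorm b.
Proof.
rewrite -ler_sqr ?nnegrE ?addr_ge0 ?enorm_ge0 // sqr_enorm sqrrD !sqr_enorm.
rewrite dotvDl !(dotvC _ (a + b)) !dotvDl (dotvC b a) mulr2n.
by have := dotv_le_enorm a b; lra.
Qed.

Lemma ler_enormB a b : enorm (a - b) <= enorm a + enorm b.
Proof. by rewrite -(enormN b) ler_enormD. Qed.

Lemma enormZ (k : R) a : enorm (k *: a) = `|k| * enorm a.
Proof. by rewrite /enorm dotvZl dotvC dotvZl mulrA -expr2 sqrtrM ?sqr_ge0 // sqrtr_sqr. Qed.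

Lemma ler_coord_enorm a i : `|a 0 i| <= enorm a.
Proof.
rewrite -ler_sqr ?nnegrE ?enorm_ge0 // sqr_enorm real_normK ?num_real //.
by rewrite /dotv (bigD1 i) //= expr2 lerDl; apply: sumr_ge0 => j _; rewrite -expr2 sqr_ge0.
Qed.

Lemma ler_enorm_sum a : enorm a <= \sum_i `|a 0 i|.
Proof.
rewrite -ler_sqr ?nnegrE ?enorm_ge0 ?sumr_ge0 // sqr_enorm expr2 mulr_sumr.
apply: ler_sum => i _; rewrite -[a 0 i * a 0 i]real_normK ?num_real // expr2.
by rewrite ler_wpM2r // (bigD1 i) //= lerDl sumr_ge0.
Qed.

Lemma enorm_bond_e_le1 (y x : 'rV[R]_d) : enorm (bond_e y x) <= 1.
Proof.
rewrite enormZ ger0_norm ?invr_ge0 ?enorm_ge0 //.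
have [->|yx_neq0] := eqVneq (enorm (y - x)) 0; first by rewrite invr0 mul0r ler01.
by rewrite mulVf.
Qed.

Lemma normr_scale_bond_e_le (c : R) (y x : 'rV[R]_d) i : `|(c *: bond_e y x) 0 i| <= `|c|.
Proof.
rewrite [X in `|X|]mxE normrM -[leRHS]mulr1 ler_wpM2l //.
exact: le_trans (ler_coord_enorm _ _) (enorm_bond_e_le1 _ _).
Qed.

End Euclid.

Section Strain.
Variables (R : realType) (d : nat).
Implicit Types (y x : 'rV[R]_d) (v : 'rV[R]_d -> 'rV[R]_d).

Lemma strainB y x v1 v2 :
  strain y x (fun p => v1 p - v2 p) = strain y x v1 - strain y x v2.
Proof.
rewrite /strain -mulrBl -dotvBl; congr (dotv _ _ / _).
by rewrite opprD opprK addrACA [in RHS]opprD opprK.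
Qed.

Lemma normr_strain_le y x v :
  `|strain y x v| <= (enorm (v y) + enorm (v x)) / enorm (y - x).
Proof.
rewrite normrM normfV (ger0_norm (enorm_ge0 _)) ler_wpM2r ?invr_ge0 ?enorm_ge0 //.
apply: le_trans (normr_dotv_le _ _) _.
apply: le_trans (ler_wpM2l (enorm_ge0 _) (enorm_bond_e_le1 y x)) _.
by rewrite mulr1 ler_enormB.
Qed.

Lemma strain_eq0 y x v : enorm (y - x) = 0 -> strain y x v = 0.
Proof. by move=> yx0; rewrite /strain yx0 invr0 mulr0. Qed.

End Strain.

Lemma measurable_inv (R : realType) : measurable_fun [set: R] (@GRing.inv R).
Proof.
apply: (@eq_measurable_fun _ _ _ _ _ (fun r : R => if r == 0 then 0 else r^-1)).
  by move=> r _; case: eqP => // ->; rewrite invr0.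
apply: measurable_fun_if => //; first exact: measurable_fun_eqr.
rewrite setTI (_ : _ @^-1` _ = [set r : R | r != 0]); last first.
  by apply/seteqP; split => r /=; case: eqP.
apply: open_continuous_measurable_fun; first exact: open_neq.
by move=> r; rewrite inE /= => r0; apply: inv_continuous.
Qed.

Lemma lipschitz_continuous (R : realType) (f : R -> R) (K : R) :
  (forall r s, `|f r - f s| <= K * `|r - s|) -> continuous f.
Proof.
move=> f_lip r; apply/cvgrPdist_lt => e e_gt0.
have K1_gt0 : 0 < `|K| + 1 by rewrite ltr_wpDl.
near=> s.
apply: le_lt_trans (f_lip r s) _.
apply: (@le_lt_trans _ _ ((`|K| + 1) * `|r - s|)).
  by rewrite ler_wpM2r // (le_trans (ler_norm K)) // lerDl.
rewrite -ltr_pdivlMl //; near: s.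
apply/nbhs_normP; exists (e / (`|K| + 1)); first by rewrite /= divr_gt0.
by move=> s /=; rewrite mulrC.
Unshelve. all: by end_near. Qed.

Lemma normr_mixed_sign_le (R : realDomainType) (m a S S' : R) :
  0 <= a <= m -> S <= 0 < S' -> `|m * S - a * S'| <= m * `|S - S'|.
Proof.
move=> /andP[a_ge0 a_le] /andP[S_le0 S'_gt0].
have mS_le0 := mulr_ge0_le0 (le_trans a_ge0 a_le) S_le0.
have aS'_ge0 := mulr_ge0 a_ge0 (ltW S'_gt0).
have := ler_wpM2r (ltW S'_gt0) a_le.
rewrite distrC [`|S - S'|]distrC !ger0_norm ?subr_ge0; lra.
Qed.

Section BondResponse.
Variables (R : realType) (mubar rL K : R) (gp : R -> R).
Hypotheses (mubar_gt0 : 0 < mubar) (rL_gt0 : 0 < rL) (K_ge0 : 0 <= K).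
Hypothesis gp_linear : forall r, 0 <= r <= rL -> gp r = mubar * r.
Hypothesis gp_ge0_le : forall r, 0 <= r -> 0 <= gp r <= mubar * r.
Hypothesis gp_lipschitz : forall r s, 0 <= r -> 0 <= s -> `|gp r - gp s| <= K * `|r - s|.

Definition phase_profile (r : R) : R := if r <= rL then 1 else gp r / (mubar * r).

Definition bond_response (c S s : R) : R :=
  (if S <= 0 then mubar else mubar * phase_profile (c * s)) * S.

Lemma phase_profileE r : 0 < r -> mubar * phase_profile r = gp r / r.
Proof.
move=> r_gt0; rewrite /phase_profile; case: ifP => [r_le|_].
  by rewrite mulr1 gp_linear ?(ltW r_gt0) ?r_le // mulfK ?gt_eqF.
by field; rewrite !gt_eqF.
Qed.

Lemma secant_ge0_le r : 0 < r -> 0 <= gp r / r <= mubar.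
Proof.
move=> r_gt0; have /andP[gp_ge0 gp_le] := gp_ge0_le (ltW r_gt0).
by rewrite divr_ge0 ?(ltW r_gt0) //= ler_pdivrMr.
Qed.

Lemma secant_lipschitz r s : 0 < r -> 0 < s ->
  s * `|gp r / r - gp s / s| <= (K + mubar) * `|r - s|.
Proof.
move=> r_gt0 s_gt0; have /andP[sec_ge0 sec_le] := secant_ge0_le r_gt0.
have -> : s * `|gp r / r - gp s / s| = `|(gp r - gp s) + gp r / r * (s - r)|.
  by rewrite -[X in X * _]gtr0_norm // -normrM; congr `|_|; field; rewrite !gt_eqF.
apply: (le_trans (ler_normD _ _)); rewrite mulrDl lerD ?gp_lipschitz ?(ltW r_gt0) ?(ltW s_gt0) //.
by rewrite normrM distrC ger0_norm // ler_wpM2r.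
Qed.

Lemma bond_response_npos c S s : S <= 0 -> bond_response c S s = mubar * S.
Proof. by rewrite /bond_response => ->. Qed.

Lemma bond_response_pos c S s : 0 < c -> 0 < S -> S <= s ->
  bond_response c S s = gp (c * s) / (c * s) * S.
Proof.
move=> c_gt0 S_gt0 S_le; rewrite /bond_response leNgt S_gt0 /=.
by rewrite phase_profileE // mulr_gt0 // (lt_le_trans S_gt0).
Qed.

Lemma normr_bond_response_le c S s : 0 < c -> S <= s ->
  `|bond_response c S s| <= mubar * `|S|.
Proof.
move=> c_gt0 S_le; have [S_le0|S_gt0] := leP S 0.
  by rewrite bond_response_npos // normrM gtr0_norm.
have /andP[sec_ge0 sec_le] := secant_ge0_le (mulr_gt0 c_gt0 (lt_le_trans S_gt0 S_le)).
by rewrite bond_response_pos // normrM ger0_norm // ler_wpM2r.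
Qed.

Lemma bond_response_lipschitz c Su su Sw sw : 0 < c -> Su <= su -> Sw <= sw ->
  `|bond_response c Su su - bond_response c Sw sw|
    <= mubar * `|Su - Sw| + (K + mubar) * `|su - sw|.
Proof.
move=> c_gt0 Su_le Sw_le.
have slack : mubar * `|Su - Sw| <= mubar * `|Su - Sw| + (K + mubar) * `|su - sw|.
  by rewrite lerDl mulr_ge0 ?addr_ge0 ?(ltW mubar_gt0).
have [Su_le0|Su_gt0] := leP Su 0; have [Sw_le0|Sw_gt0] := leP Sw 0.
- by rewrite !bond_response_npos // -mulrBr normrM gtr0_norm.
- rewrite bond_response_npos // bond_response_pos //; apply: le_trans slack.
  have := secant_ge0_le (mulr_gt0 c_gt0 (lt_le_trans Sw_gt0 Sw_le)).
  by move/normr_mixed_sign_le; apply; rewrite Su_le0.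
- rewrite (bond_response_npos _ _ Sw_le0) bond_response_pos // distrC.
  apply: le_trans slack; rewrite (distrC Su).
  have := secant_ge0_le (mulr_gt0 c_gt0 (lt_le_trans Su_gt0 Su_le)).
  by move/normr_mixed_sign_le; apply; rewrite Sw_le0.
have su_gt0 := lt_le_trans Su_gt0 Su_le; have sw_gt0 := lt_le_trans Sw_gt0 Sw_le.
rewrite !bond_response_pos //.
set hu := gp (c * su) / (c * su); set hw := gp (c * sw) / (c * sw).
have /andP[hu_ge0 hu_le] := secant_ge0_le (mulr_gt0 c_gt0 su_gt0).
have hdiff : Sw * `|hu - hw| <= (K + mubar) * `|su - sw|.
  have := secant_lipschitz (mulr_gt0 c_gt0 su_gt0) (mulr_gt0 c_gt0 sw_gt0).
  rewrite -mulrBr normrM gtr0_norm // mulrCA -mulrA ler_pM2l // => /(le_trans _); apply.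
  by rewrite ler_wpM2r.
rewrite (_ : hu * Su - hw * Sw = hu * (Su - Sw) + Sw * (hu - hw)); last by ring.
apply: (le_trans (ler_normD _ _)); apply: lerD; first by rewrite normrM ger0_norm // ler_wpM2r.
by rewrite normrM gtr0_norm.
Qed.

Lemma max0_lipschitz (r s : R) : `|Num.max r 0 - Num.max s 0| <= `|r - s|.
Proof.
have := ler_norm (r - s); have := ler_norm (s - r); rewrite distrC => sr rs.
rewrite ler_norml; have [r_ge0|r_lt0] := leP 0 r; have [s_ge0|s_lt0] := leP 0 s;
  rewrite ?(max_l r_ge0) ?(max_l s_ge0) ?(max_r (ltW r_lt0)) ?(max_r (ltW s_lt0));
  apply/andP; split; lra.
Qed.

Lemma measurable_phase_profile : measurable_fun [set: R] phase_profile.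
Proof.
apply: measurable_fun_if => //; first exact: measurable_fun_ler.
apply: (eq_measurable_fun (fun r : R => gp (Num.max r 0) * (mubar * r)^-1)).
  move=> r; rewrite inE /= => -[_ /negbT]; rewrite -ltNge => rL_lt.
  by rewrite max_l // ltW // (lt_trans rL_gt0 rL_lt).
apply: measurable_funM; apply: measurable_funTS.
  apply: continuous_measurable_fun; apply: (@lipschitz_continuous _ _ K) => r s.
  apply: le_trans (gp_lipschitz _ _) _; rewrite ?le_max ?lexx ?orbT //.
  by rewrite ler_wpM2l // max0_lipschitz.
exact: measurableT_comp (@measurable_inv R) _.
Qed.

End BondResponse.

Section RunningSup.
Variable R : realType.
Implicit Types (f g : R -> R) (t : R).

(* [strain_max u t y x] is [running_sup (fun tau => strain y x (u tau)) t] by definition. *)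
Definition running_sup f t : R := sup [set s | exists2 tau, 0 <= tau <= t & s = f tau].

Definition segment_continuous t f := forall tau, 0 <= tau <= t ->
  forall e, 0 < e -> exists2 del, 0 < del &
    forall s, 0 <= s <= t -> `|s - tau| < del -> `|f s - f tau| <= e.

Lemma running_sup_ge f t M tau : (forall s, 0 <= s <= t -> `|f s| <= M) ->
  0 <= tau <= t -> f tau <= running_sup f t.
Proof.
move=> f_bnd tau_in; apply: ub_le_sup; last by exists tau.
by exists M => _ [s s_in ->]; apply: le_trans (ler_norm _) (f_bnd _ s_in).
Qed.

Lemma running_sup_le f t b : 0 <= t ->
  (forall tau, 0 <= tau <= t -> f tau <= b) -> running_sup f t <= b.
Proof.
move=> t_ge0 f_le; apply: ge_sup => [|_ [tau tau_in ->]]; last exact: f_le.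
by exists (f 0), 0; rewrite ?lexx.
Qed.

Lemma running_supB_le f g t Mf Mg e : 0 <= t ->
  (forall tau, 0 <= tau <= t -> `|f tau| <= Mf) ->
  (forall tau, 0 <= tau <= t -> `|g tau| <= Mg) ->
  (forall tau, 0 <= tau <= t -> `|f tau - g tau| <= e) ->
  `|running_sup f t - running_sup g t| <= e.
Proof.
move=> t_ge0 f_bnd g_bnd fg_close.
have g_le : running_sup g t <= running_sup f t + e.
  apply: running_sup_le => // tau tau_in.
  have := fg_close _ tau_in; rewrite ler_norml => /andP[fg_ge _].
  have := running_sup_ge f_bnd tau_in; lra.
have f_le : running_sup f t <= running_sup g t + e.
  apply: running_sup_le => // tau tau_in.
  have := fg_close _ tau_in; rewrite ler_norml => /andP[_ fg_le].
  have := running_sup_ge g_bnd tau_in; lra.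
by rewrite ler_norml; apply/andP; split; lra.
Qed.

Definition time_grid t (n : nat) : R :=
  if @pickle_inv (nat * nat)%type n is Some (k, m)
  then t * Num.min 1 (k%:R / m.+1%:R) else 0.

Lemma time_grid_in t n : 0 <= t -> 0 <= time_grid t n <= t.
Proof.
move=> t_ge0; rewrite /time_grid; case: pickle_inv => [[k m]|]; last by rewrite lexx.
have min_ge0 : 0 <= Num.min 1 (k%:R / m.+1%:R :> R) by rewrite le_min ler01 divr_ge0.
by rewrite mulr_ge0 //= ler_piMr // ge_min lexx.
Qed.

Lemma time_grid_dense t tau del : 0 <= tau <= t -> 0 < del ->
  exists n, `|time_grid t n - tau| < del.
Proof.
move=> /andP[tau_ge0 tau_le] del_gt0; have t_ge0 := le_trans tau_ge0 tau_le.
have [t0|t_neq0] := eqVneq t 0.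
  exists 0%N; rewrite /time_grid (_ : tau = 0); last by apply/le_anti; rewrite tau_ge0 andbT -t0.
  by case: pickle_inv => [[k m]|]; rewrite ?t0 ?mul0r subrr normr0.
have t_gt0 : 0 < t by rewrite lt0r t_neq0.
pose m := Num.truncn (t / del); pose M : R := m.+1%:R.
have M_gt0 : 0 < M by rewrite ltr0Sn.
have tM : t < M * del by rewrite -ltr_pdivrMr // truncnS_gt.
pose k := Num.truncn (tau * M / t).
have /andP[k_le k_gt] : k%:R <= tau * M / t < k.+1%:R.
  by rewrite truncn_itv // divr_ge0 // mulr_ge0 // ltW.
rewrite ler_pdivlMr // in k_le; rewrite ltr_pdivrMr // -natr1 in k_gt.
have kM_le1 : k%:R / M <= 1.
  rewrite ler_pdivrMr // mul1r -(ler_pM2r t_gt0); apply: le_trans k_le _.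
  by rewrite mulrC ler_wpM2l // ltW.
exists (pickle (k, m)); rewrite /time_grid pickleK_inv (min_idPr kM_le1) -/M.
have grid_M : t * (k%:R / M) * M = k%:R * t by rewrite -mulrA divfK ?gt_eqF // mulrC.
have grid_le : t * (k%:R / M) <= tau by rewrite -(ler_pM2r M_gt0) grid_M.
have grid_gt : tau < t * (k%:R / M) + del by rewrite -(ltr_pM2r M_gt0) mulrDl grid_M; lra.
by rewrite distrC ger0_norm ?subr_ge0 // ltrBlDr addrC.
Qed.

Lemma running_sup_grid f t M : 0 <= t ->
  (forall tau, 0 <= tau <= t -> `|f tau| <= M) -> segment_continuous t f ->
  running_sup f t = sups (fun n => f (time_grid t n)) 0.
Proof.
move=> t_ge0 f_bnd f_cont.
have grid_ub : has_ubound (sdrop (fun n => f (time_grid t n)) 0).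
  by exists M => _ [n _ <-]; apply: le_trans (ler_norm _) (f_bnd _ (time_grid_in n t_ge0)).
apply/le_anti/andP; split; last first.
  apply: ge_sup => [|_ [n _ <-]]; first by exists (f (time_grid t 0)), 0%N.
  exact: running_sup_ge f_bnd (time_grid_in n t_ge0).
apply: running_sup_le => // tau tau_in; apply/ler_addgt0Pr => e e_gt0.
have [del del_gt0 f_close] := f_cont _ tau_in e e_gt0.
have [n grid_close] := time_grid_dense tau_in del_gt0.
have := f_close _ (time_grid_in n t_ge0) grid_close.
have : f (time_grid t n) <= sups (fun n => f (time_grid t n)) 0.
  by apply: (ub_le_sup grid_ub); exists n.
rewrite ler_norml; lra.
Qed.

Lemma measurable_running_sup (dT : measure_display) (T : measurableType dT)
    (D : set T) (F : T -> R -> R) t : 0 <= t ->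
  (forall tau, 0 <= tau <= t -> measurable_fun D (F^~ tau)) ->
  (forall z, D z -> exists M, forall tau, 0 <= tau <= t -> `|F z tau| <= M) ->
  (forall z, D z -> segment_continuous t (F z)) ->
  measurable_fun D (fun z => running_sup (F z) t).
Proof.
move=> t_ge0 F_meas F_bnd F_cont.
apply: (@eq_measurable_fun _ _ _ _ _ (fun z => sups (fun n => F z (time_grid t n)) 0)).
  move=> z; rewrite inE => Dz; have [M F_le] := F_bnd z Dz.
  by rewrite (running_sup_grid t_ge0 F_le (F_cont z Dz)).
apply: measurable_fun_sups => [z Dz|n]; last exact/F_meas/time_grid_in.
have [M F_le] := F_bnd z Dz.
by exists M => _ [n _ <-]; apply: le_trans (ler_norm _) (F_le _ (time_grid_in n t_ge0)).
Qed.

End RunningSup.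

Section CoordMeasurability.
Variables (R : realType) (d : nat) (dT : measure_display) (T : measurableType dT).
Variable coord : T -> 'rV[R]_d.
Hypothesis coord_measurable : forall j, measurable_fun setT (fun z => coord z 0 j).
Variable D : set T.

Lemma measurable_enorm_coordB x : measurable_fun D (fun z => enorm (coord z - x)).
Proof.
apply: (eq_measurable_fun (fun z =>
  Num.sqrt (\sum_i ((coord z 0 i - x 0 i) * (coord z 0 i - x 0 i))))).
  by move=> z _; rewrite /enorm /dotv; congr Num.sqrt; apply: eq_bigr => i _; rewrite !mxE.
apply: measurableT_comp; first exact: continuous_measurable_fun (@sqrt_continuous R).
apply: measurable_sum => i; apply: measurable_funM; apply: measurable_funB => //;
  exact: measurable_funTS.
Qed.

Lemma measurable_inv_enorm_coordB x : measurable_fun D (fun z => (enorm (coord z - x))^-1).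
Proof. exact: measurableT_comp (@measurable_inv R) (measurable_enorm_coordB x). Qed.

Lemma measurable_bond_e x i : measurable_fun D (fun z => bond_e (coord z) x 0 i).
Proof.
apply: (eq_measurable_fun (fun z => (enorm (coord z - x))^-1 * (coord z 0 i - x 0 i))).
  by move=> z _; rewrite !mxE.
apply: measurable_funM; first exact: measurable_inv_enorm_coordB.
by apply: measurable_funB => //; exact: measurable_funTS.
Qed.

Lemma measurable_strain x (v : 'rV[R]_d -> 'rV[R]_d) :
  (forall i, measurable_fun D (fun z => v (coord z) 0 i)) ->
  measurable_fun D (fun z => strain (coord z) x v).
Proof.
move=> v_meas; apply: (eq_measurable_fun (fun z =>
    (\sum_i (v (coord z) 0 i - v x 0 i) * bond_e (coord z) x 0 i) * (enorm (coord z - x))^-1)).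
  by move=> z _; rewrite /strain /dotv; congr (_ * _); apply: eq_bigr => i _; rewrite !mxE.
apply: measurable_funM; last exact: measurable_inv_enorm_coordB.
apply: measurable_sum => i; apply: measurable_funM; last exact: measurable_bond_e.
exact: measurable_funB.
Qed.

End CoordMeasurability.

Section Integrals.
Variables (dT : measure_display) (T : measurableType dT) (R : realType).
Variables (mu : {measure set T -> \bar R}) (D : set T).
Hypothesis mD : measurable D.

Lemma integrableZl_EFin (k : R) (g : T -> R) : mu.-integrable D (EFin \o g) ->
  mu.-integrable D (EFin \o (fun z => k * g z)).
Proof.
by move=> g_int; apply: eq_integrable (integrableZl mD k g_int) => // z _; rewrite /= EFinM.
Qed.

Lemma integrable_dominated (f g : T -> R) (a : R) :
  measurable_fun D f -> mu.-integrable D (EFin \o g) ->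
  (forall z, D z -> `|f z| <= a * g z) -> mu.-integrable D (EFin \o f).
Proof.
move=> f_meas g_int f_le.
apply: (@le_integrable _ _ _ mu D mD _ _ _ _ (integrableZl_EFin a g_int)).
  exact/measurable_EFinP.
by move=> z Dz /=; rewrite lee_fin; apply: le_trans (f_le z Dz) (ler_norm (a * g z)).
Qed.

Lemma normr_RintegralB_le (f h g : T -> R) (a c : R) :
  measurable_fun D f -> measurable_fun D h -> mu.-integrable D (EFin \o g) ->
  (forall z, D z -> `|f z| <= a * g z) -> (forall z, D z -> `|f z - h z| <= c * g z) ->
  `|Rintegral mu D f - Rintegral mu D h| <= c * Rintegral mu D g.
Proof.
move=> f_meas h_meas g_int f_le fh_le.
have fh_meas : measurable_fun D (fun z => f z - h z) by exact: measurable_funB.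
have f_int := integrable_dominated f_meas g_int f_le.
have h_int : mu.-integrable D (EFin \o h).
  apply: (integrable_dominated h_meas g_int (a := a + c)) => z Dz.
  rewrite (_ : h z = f z - (f z - h z)); last by ring.
  by rewrite mulrDl; apply: le_trans (ler_normB _ _) (lerD (f_le z Dz) (fh_le z Dz)).
have fh_int := integrable_dominated fh_meas g_int fh_le.
have abs_int : mu.-integrable D (EFin \o (fun z => `|f z - h z|)).
  apply: (integrable_dominated _ g_int (a := c)) => [|z Dz]; last by rewrite normr_id fh_le.
  exact: measurableT_comp (@normr_measurable R setT) fh_meas.
rewrite -(RintegralB mD f_int h_int) -(RintegralZl c mD g_int).
exact: le_trans (le_normr_Rintegral mD fh_int)
  (le_Rintegral mD abs_int (integrableZl_EFin c g_int) fh_le).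
Qed.

End Integrals.

Lemma CX_norm_ge (R : realType) (d : nat) (T0 : R) (Omega : set 'rV[R]_d)
    (u w : R -> 'rV[R]_d -> 'rV[R]_d) (Bu Bw : R) :
  (forall s y, 0 <= s <= T0 -> Omega y -> enorm (u s y) <= Bu) ->
  (forall s y, 0 <= s <= T0 -> Omega y -> enorm (w s y) <= Bw) ->
  forall s y, 0 <= s <= T0 -> Omega y ->
  enorm (u s y - w s y) <= CX_norm T0 Omega (fun s y => u s y - w s y).
Proof.
move=> u_le w_le s y s_in Omega_y; apply: ub_le_sup; last by exists s, y.
exists (Bu + Bw) => _ [s' [y' [s'_in Omega_y' ->]]].
by apply: le_trans (ler_enormB _ _) _; rewrite lerD ?u_le ?w_le.
Qed.

Section PeridynamicForce.
Variables (R : realType) (d : nat) (dT : measure_display) (T : measurableType dT).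
Variables (mu : {measure set T -> \bar R}) (coord : T -> 'rV[R]_d).
Hypothesis coord_measurable : forall j, measurable_fun setT (fun z => coord z 0 j).
Variables (Omega : set 'rV[R]_d) (J gp : R -> R) (omega_d eps mubar rL L K T0 : R).
Hypotheses (mOmega : measurable (coord @^-1` Omega)) (omega_d_gt0 : 0 < omega_d)
  (eps_gt0 : 0 < eps) (L_gt0 : 0 < L) (mubar_gt0 : 0 < mubar) (rL_gt0 : 0 < rL)
  (K_ge0 : 0 <= K).
Hypothesis J_ge0 : forall r, 0 <= r -> 0 <= J r.
Hypothesis J_noninc : forall r s, 0 <= r <= s -> J s <= J r.
Hypothesis gp_linear : forall r, 0 <= r <= rL -> gp r = mubar * r.
Hypothesis gp_ge0_le : forall r, 0 <= r -> 0 <= gp r <= mubar * r.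
Hypothesis gp_lipschitz : forall r s, 0 <= r -> 0 <= s -> `|gp r - gp s| <= K * `|r - s|.
Variables (t : R) (x : 'rV[R]_d).
Hypotheses (t_in : 0 <= t <= T0) (Omega_x : Omega x).

Local Notation D := (coord @^-1` Omega).
Local Notation kern y := (Defs.kernel Omega J omega_d eps y x).
Local Notation weight y := (kern y / enorm (y - x)).
Local Notation force v y := (bond_force Omega J omega_d eps gp mubar rL L v t y x).
Local Notation response v y := (bond_response mubar rL gp (Num.sqrt (enorm (y - x) / L))
  (strain y x (v t)) (strain_max v t y x)).
Local Notation bounded_by v B :=
  (forall s y, 0 <= s <= T0 -> Omega y -> enorm (v s y) <= B).
Local Notation time_continuous v := (forall s, 0 <= s <= T0 -> forall e, 0 < e ->
  exists2 del, 0 < del & forall s', 0 <= s' <= T0 -> `|s' - s| < del ->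
    forall y, Omega y -> enorm (v s' y - v s y) <= e).

Let upto_T0 s : 0 <= s <= t -> 0 <= s <= T0.
Proof. by case/andP: t_in => _ tT0 /andP[-> /le_trans]; apply. Qed.

Let t_ge0 : 0 <= t. Proof. by case/andP: t_in. Qed.

Lemma bond_forceE v y : force v y = (kern y * response v y) *: bond_e y x.
Proof. by rewrite /bond_force -mulrA. Qed.

Lemma kernel_ge0 y : 0 <= kern y.
Proof.
rewrite /Defs.kernel divr_ge0 //.
  by rewrite mulr_ge0 ?J_ge0 ?divr_ge0 ?enorm_ge0 ?(ltW eps_gt0) //; case: asboolP.
by rewrite !mulr_ge0 ?exprn_ge0 ?(ltW omega_d_gt0) ?(ltW eps_gt0).
Qed.

Lemma weight_ge0 y : 0 <= weight y.
Proof. by rewrite divr_ge0 ?kernel_ge0 ?enorm_ge0. Qed.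

Lemma normr_strain_le_bound v B y s : bounded_by v B -> Omega y -> 0 <= s <= T0 ->
  `|strain y x (v s)| <= (B + B) / enorm (y - x).
Proof.
move=> v_le Omega_y s_in; apply: le_trans (normr_strain_le _ _ _) _.
by rewrite ler_wpM2r ?invr_ge0 ?enorm_ge0 // lerD ?v_le.
Qed.

Lemma strain_segment_continuous v y : time_continuous v -> Omega y ->
  segment_continuous t (fun s => strain y x (v s)).
Proof.
move=> v_cont Omega_y s s_in e e_gt0.
have [yx0|yx_neq0] := eqVneq (enorm (y - x)) 0.
  by exists 1 => // s' _ _; rewrite !strain_eq0 // subrr normr0 ltW.
have yx_gt0 : 0 < enorm (y - x) by rewrite lt0r yx_neq0 enorm_ge0.
have e'_gt0 : 0 < e * enorm (y - x) / 2 by rewrite divr_gt0 // mulr_gt0.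
have [del del_gt0 v_close] := v_cont s (upto_T0 s_in) _ e'_gt0.
exists del => // s' s'_in s's_lt; rewrite -strainB.
apply: le_trans (normr_strain_le _ _ _) _; rewrite ler_pdivrMr //.
apply: le_trans (lerD (v_close _ (upto_T0 s'_in) s's_lt y Omega_y)
  (v_close _ (upto_T0 s'_in) s's_lt x Omega_x)) _.
by rewrite -splitr.
Qed.

Lemma measurable_kernel : measurable_fun D (fun z => kern (coord z)).
Proof.
pose J0 r := J (Num.max r 0).
have J0_meas : measurable_fun setT J0.
  apply: nonincreasing_measurable => // r s rs; rewrite /J0.
  by rewrite J_noninc // le_max lexx orbT /= ge_max !le_max rs lexx !orbT.
apply: (eq_measurable_fun (fun z => J0 (enorm (coord z - x) / eps)
    / (eps * (omega_d * eps ^+ d)))).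
  move=> z; rewrite inE => Omega_z.
  by rewrite /Defs.kernel asboolT // mul1r /J0 max_l // divr_ge0 ?enorm_ge0 ?(ltW eps_gt0).
apply: measurable_funM => //; apply: measurableT_comp J0_meas _.
by apply: measurable_funM => //; exact: measurable_enorm_coordB.
Qed.

Lemma measurable_force v i : in_CX mu coord T0 Omega v ->
  measurable_fun D (fun z => force v (coord z) 0 i).
Proof.
move=> [v_meas [B v_le] v_cont _].
have S_meas s : 0 <= s <= T0 -> measurable_fun D (fun z => strain (coord z) x (v s)).
  by move=> s_in; apply: measurable_strain => //; exact: v_meas.
have Smax_meas : measurable_fun D (fun z => strain_max v t (coord z) x).
  apply: measurable_running_sup => // [s s_in|z Omega_z|z Omega_z].
  - exact/S_meas/upto_T0.
  - exists ((B + B) / enorm (coord z - x)) => s s_in.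
    exact: normr_strain_le_bound (upto_T0 s_in).
  - exact: strain_segment_continuous.
apply: (eq_measurable_fun (fun z => kern (coord z) * (if strain (coord z) x (v t) <= 0
    then mubar else mubar * phase_profile mubar rL gp
      (Num.sqrt (enorm (coord z - x) / L) * strain_max v t (coord z) x))
    * strain (coord z) x (v t) * bond_e (coord z) x 0 i)).
  by move=> z _; rewrite /bond_force [RHS]mxE.
apply: measurable_funM; last exact: measurable_bond_e.
apply: measurable_funM; last exact: S_meas.
apply: measurable_funM; first exact: measurable_kernel.
apply: measurable_fun_if => //; first by apply: measurable_fun_ler => //; exact: S_meas.
apply: (measurable_funS mOmega (@subIsetl _ _ _)); apply: measurable_funM => //.
apply: measurableT_comp (measurable_phase_profile mubar rL_gt0 K_ge0 gp_lipschitz) _.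
apply: measurable_funM; last exact: Smax_meas.
apply: measurableT_comp (continuous_measurable_fun (@sqrt_continuous R)) _.
by apply: measurable_funM => //; exact: measurable_enorm_coordB.
Qed.

Lemma measurable_weight : measurable_fun D (fun z => weight (coord z)).
Proof.
apply: measurable_funM; first exact: measurable_kernel.
exact: measurable_inv_enorm_coordB.
Qed.

Lemma integrable_weight :
  (\int[mu]_(z in D) (weight (coord z))%:E \is a fin_num)%E ->
  mu.-integrable D (EFin \o (fun z => weight (coord z))).
Proof.
move=> I_fin; apply/integrableP; split; first exact/measurable_EFinP/measurable_weight.
rewrite (eq_integral (fun z => (weight (coord z))%:E)) => [|z _]; last first.
  by rewrite /= ger0_norm ?weight_ge0.
by rewrite -ge0_fin_numE // integral_ge0 // => z _; rewrite lee_fin weight_ge0.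
Qed.

Lemma normr_force_coord_le v y i : `|force v y 0 i| <= kern y * `|response v y|.
Proof.
rewrite bond_forceE; apply: le_trans (normr_scale_bond_e_le _ _ _ _) _.
by rewrite normrM ger0_norm ?kernel_ge0.
Qed.

Lemma normr_forceB_coord_le u w y i :
  `|force u y 0 i - force w y 0 i| <= kern y * `|response u y - response w y|.
Proof.
have := normr_scale_bond_e_le (kern y * (response u y - response w y)) y x i.
by rewrite normrM ger0_norm ?kernel_ge0 // mulrBr scalerBl [X in `|X|]mxE
  [X in `|_ + X|]mxE -!bond_forceE.
Qed.

Lemma normr_response_le v B y : bounded_by v B -> Omega y ->
  `|response v y| <= mubar * ((B + B) / enorm (y - x)).
Proof.
move=> v_le Omega_y.
have [yx0|yx_neq0] := eqVneq (enorm (y - x)) 0.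
  by rewrite strain_eq0 // /bond_response mulr0 normr0 yx0 invr0 !mulr0.
have yx_gt0 : 0 < enorm (y - x) by rewrite lt0r yx_neq0 enorm_ge0.
have S_le s : 0 <= s <= t -> `|strain y x (v s)| <= (B + B) / enorm (y - x).
  by move=> s_in; apply: normr_strain_le_bound (upto_T0 s_in).
have c_gt0 : 0 < Num.sqrt (enorm (y - x) / L) by rewrite sqrtr_gt0 divr_gt0.
have t_in_t : 0 <= t <= t by rewrite t_ge0 lexx.
apply: le_trans (normr_bond_response_le mubar_gt0 gp_linear gp_ge0_le c_gt0
  (running_sup_ge S_le t_in_t)) _.
by rewrite ler_wpM2l ?(ltW mubar_gt0) ?S_le.
Qed.

Lemma normr_responseB_le u w Bu Bw N y : bounded_by u Bu -> bounded_by w Bw ->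
  bounded_by (fun s y => u s y - w s y) N -> Omega y ->
  `|response u y - response w y| <= (2 * mubar + K) * ((N + N) / enorm (y - x)).
Proof.
move=> u_le w_le uw_le Omega_y.
have [yx0|yx_neq0] := eqVneq (enorm (y - x)) 0.
  by rewrite !strain_eq0 // /bond_response !mulr0 subrr normr0 yx0 invr0 !mulr0.
have yx_gt0 : 0 < enorm (y - x) by rewrite lt0r yx_neq0 enorm_ge0.
have Su_le s : 0 <= s <= t -> `|strain y x (u s)| <= (Bu + Bu) / enorm (y - x).
  by move=> s_in; apply: normr_strain_le_bound (upto_T0 s_in).
have Sw_le s : 0 <= s <= t -> `|strain y x (w s)| <= (Bw + Bw) / enorm (y - x).
  by move=> s_in; apply: normr_strain_le_bound (upto_T0 s_in).
have SuSw_le s : 0 <= s <= t ->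
    `|strain y x (u s) - strain y x (w s)| <= (N + N) / enorm (y - x).
  move=> s_in; rewrite -strainB; apply: le_trans (normr_strain_le _ _ _) _.
  by rewrite ler_wpM2r ?invr_ge0 ?enorm_ge0 // lerD ?uw_le ?upto_T0.
have c_gt0 : 0 < Num.sqrt (enorm (y - x) / L) by rewrite sqrtr_gt0 divr_gt0.
have t_in_t : 0 <= t <= t by rewrite t_ge0 lexx.
apply: le_trans (bond_response_lipschitz mubar_gt0 K_ge0 gp_linear gp_ge0_le gp_lipschitz
  c_gt0 (running_sup_ge Su_le t_in_t) (running_sup_ge Sw_le t_in_t)) _.
have := SuSw_le t t_in_t; have := running_supB_le t_ge0 Su_le Sw_le SuSw_le.
set e := (N + N) / enorm (y - x) => Smax_le S_le.
apply: le_trans (lerD (ler_wpM2l (ltW mubar_gt0) S_le)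
  (ler_wpM2l (addr_ge0 K_ge0 (ltW mubar_gt0)) Smax_le)) _.
by rewrite -mulrDl (_ : mubar + (K + mubar) = 2 * mubar + K) //; ring.
Qed.

Local Notation peri v := (peri_op mu coord Omega J omega_d eps gp mubar rL L v t x).
Local Notation lip_const := (2 * (2 * mubar + K)).
Local Notation CX := (in_CX mu coord T0 Omega).

Lemma normr_force_le v B y i : bounded_by v B -> Omega y ->
  `|force v y 0 i| <= mubar * (B + B) * weight y.
Proof.
move=> v_le Omega_y; apply: le_trans (normr_force_coord_le v y i) _.
rewrite [leRHS](_ : _ = kern y * (mubar * ((B + B) / enorm (y - x)))); last by ring.
by apply: ler_wpM2l; [exact: kernel_ge0 | exact: normr_response_le v_le Omega_y].
Qed.

Lemma normr_forceB_le u w Bu Bw N y i : bounded_by u Bu -> bounded_by w Bw ->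
  bounded_by (fun s y => u s y - w s y) N -> Omega y ->
  `|force u y 0 i - force w y 0 i| <= lip_const * N * weight y.
Proof.
move=> u_le w_le uw_le Omega_y; apply: le_trans (normr_forceB_coord_le u w y i) _.
rewrite [leRHS](_ : _ = kern y * ((2 * mubar + K) * ((N + N) / enorm (y - x)))); last by ring.
by apply: ler_wpM2l; [exact: kernel_ge0 | exact: normr_responseB_le u_le w_le uw_le Omega_y].
Qed.

Lemma peri_opB_coord u w i : (peri u - peri w) 0 i =
  Rintegral mu D (fun z => force w (coord z) 0 i) - Rintegral mu D (fun z => force u (coord z) 0 i).
Proof. by rewrite !mxE opprK addrC. Qed.

Lemma peri_op_coord_eq u w i : CX u -> CX w ->
  CX_norm T0 Omega (fun s y => u s y - w s y) = 0 -> peri u 0 i = peri w 0 i.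
Proof.
move=> [_ [Bu u_le] _ _] [_ [Bw w_le] _ _] N0.
rewrite !mxE; congr (- _); apply: eq_Rintegral => z; rewrite inE => Omega_z.
have := normr_forceB_le i u_le w_le (CX_norm_ge u_le w_le) Omega_z.
by rewrite N0 mulr0 mul0r normr_le0 subr_eq0 => /eqP.
Qed.

Lemma peri_op_eq u w : CX u -> CX w ->
  d%:R * CX_norm T0 Omega (fun s y => u s y - w s y) = 0 -> peri u = peri w.
Proof.
move=> CXu CXw /eqP; rewrite mulf_eq0 pnatr_eq0 => dN0.
apply/rowP => i; apply: peri_op_coord_eq => //; move: dN0 => /orP[/eqP d0|/eqP //].
by have := ltn_ord i; rewrite [X in (_ < X)%N]d0.
Qed.

Lemma normr_peri_opB_coord_le u w i : CX u -> CX w ->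
  mu.-integrable D (EFin \o (fun z => weight (coord z))) ->
  `|(peri u - peri w) 0 i| <= lip_const * CX_norm T0 Omega (fun s y => u s y - w s y)
    * Rintegral mu D (fun z => weight (coord z)).
Proof.
move=> CXu CXw weight_int; have [_ [Bu u_le] _ _] := CXu; have [_ [Bw w_le] _ _] := CXw.
rewrite peri_opB_coord distrC.
apply: (normr_RintegralB_le mOmega (measurable_force i CXu) (measurable_force i CXw) weight_int)
  => z Omega_z; first exact: normr_force_le u_le Omega_z.
exact: normr_forceB_le u_le w_le (CX_norm_ge u_le w_le) Omega_z.
Qed.

Lemma enorm_peri_opB_le u w : CX u -> CX w ->
  ((enorm (peri u - peri w))%:E
    <= (d%:R * lip_const * CX_norm T0 Omega (fun s y => u s y - w s y))%:E
       * \int[mu]_(z in D) (weight (coord z))%:E)%E.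
Proof.
move=> CXu CXw; have [_ [Bu u_le] _ _] := CXu; have [_ [Bw w_le] _ _] := CXw.
set N := CX_norm _ _ _.
have [dN0|dN_neq0] := eqVneq (d%:R * N) 0.
  by rewrite (peri_op_eq CXu CXw dN0) subrr enorm0 mulrAC dN0 mul0r mul0e.
have CN_gt0 : 0 < d%:R * lip_const * N.
  have N_ge0 : 0 <= N := le_trans (enorm_ge0 _) (CX_norm_ge u_le w_le t_in Omega_x).
  have lip_gt0 : 0 < lip_const by rewrite mulr_gt0 // ltr_wpDr // mulr_gt0.
  by rewrite mulrAC mulr_gt0 // lt0r dN_neq0 mulr_ge0.
have [I_fin|I_infty] := boolP (\int[mu]_(z in D) (weight (coord z))%:E \is a fin_num)%E.
  rewrite -(fineK I_fin) -EFinM lee_fin; apply: le_trans (ler_enorm_sum _) _.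
  apply: le_trans (ler_sum _ (fun i _ =>
    normr_peri_opB_coord_le i CXu CXw (integrable_weight I_fin))) _.
  by rewrite sumr_const card_ord -[X in X <= _]mulr_natl /N /Rintegral !mulrA.
have I_ge0 : (0 <= \int[mu]_(z in D) (weight (coord z))%:E)%E.
  by apply: integral_ge0 => z _; rewrite lee_fin weight_ge0.
move: I_infty; rewrite ge0_fin_numE // -leNgt leye_eq => /eqP ->.
by rewrite mulry gtr0_sg // mul1e leey.
Qed.

End PeridynamicForce.

Lemma lipschitz_claim_holds (R : realType) (d : nat) (dT : measure_display)
    (T : measurableType dT) (mu : {measure set T -> \bar R}) (coord : T -> 'rV[R]_d)
    (omega_d : R) :
  (forall j, measurable_fun setT (fun z => coord z 0 j)) -> 0 < omega_d ->
  lipschitz_claim mu coord omega_d.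
Proof.
move=> coord_meas omega_d_gt0 Omega eps L mubar M T0 rL rC rF J gp _ _ _ _ mOmega
  eps_gt0 L_gt0 mubar_gt0 _ J_pos J_dec _ J_vanish rL_gt0 _ _ gp_linear _ _ _ gp_ge0_le
  [K gp_lip].
have gp_lipschitz r s : 0 <= r -> 0 <= s -> `|gp r - gp s| <= `|K| * `|r - s|.
  by move=> r_ge0 s_ge0; apply: le_trans (gp_lip r s r_ge0 s_ge0) _; rewrite ler_wpM2r ?ler_norm.
have J_ge0 r : 0 <= r -> 0 <= J r.
  by move=> r_ge0; have [r_lt1|r_ge1] := ltP r 1; [rewrite ltW // J_pos // r_ge0|rewrite J_vanish].
have J_noninc r s : 0 <= r <= s -> J s <= J r.
  move=> rs; have [s_lt1|s_ge1] := ltP s 1; first exact: J_dec.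
  by rewrite J_vanish // J_ge0 //; case/andP: rs.
exists (d%:R * (2 * (2 * mubar + `|K|)))%R => u w CXu CXw t x t_in Omega_x.
exact: enorm_peri_opB_le.
Qed.

Lemma measurable_coord2 (R : realType) j :
  measurable_fun setT (fun z => @coord2 R z 0 j).
Proof.
rewrite (_ : (fun z => _) = (fun z : R * R => [:: z.1; z.2]`_j)); last first.
  by apply/funext => z; rewrite /coord2 mxE.
by case: j => -[|[|m]] hm //=; [exact: measurable_fst | exact: measurable_snd].
Qed.

Lemma measurable_coord3 (R : realType) j :
  measurable_fun setT (fun z => @coord3 R z 0 j).
Proof.
rewrite (_ : (fun z => _) = (fun z : (R * R) * R => [:: z.1.1; z.1.2; z.2]`_j)); last first.
  by apply/funext => z; rewrite /coord3 mxE.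
case: j => -[|[|[|m]]] hm //=; last exact: measurable_snd.
- exact: measurableT_comp measurable_fst measurable_fst.
- exact: measurableT_comp measurable_snd measurable_fst.
Qed.

Theorem mainTheorem3 (R : realType) :
  lipschitz_claim (@leb2 R) (@coord2 R) pi /\
  lipschitz_claim (@leb3 R) (@coord3 R) (4 / 3 * pi).
Proof.
split; apply: lipschitz_claim_holds.
- exact: measurable_coord2.
- exact: pi_gt0.
- exact: measurable_coord3.
- by rewrite mulr_gt0 ?pi_gt0 // divr_gt0.
Qed.
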